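(* Given $a,b,c\in\ell_\infty$, there is a continuous symmetric trilinear form $A\in\mathcal{L}_s(^3\ell_1)$ such that for every $z_1\in\ell_1''$ and all $z_2,z_3\in c_0^\perp\subseteq\ell_1''$, $$\tilde A(z_1,z_2,z_3)=z_1(a)\,z_2(b)\,z_3(c).$$
   Context: $\ell_1''=\ell_\infty'$ and $c_0^\perp\subseteq\ell_1''$ is the annihilator of $c_0\subseteq\ell_\infty$. For a continuous trilinear form $A$ on $\ell_1$, its canonical (Aron–Berner) extension is $\tilde A(z_1,z_2,z_3)=\lim_{\alpha}\lim_{\beta}\lim_{\gamma}A(x_\alpha,y_\beta,u_\gamma)$, where $(x_\alpha),(y_\beta),(u_\gamma)\subseteq\ell_1$ are nets weak-star converging to $z_1,z_2,z_3$ respectively, with limits taken from the last variable to the first. *)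

From Stdlib Require Import Reals.
From Coquelicot Require Import Coquelicot.
Open Scope R_scope.

Definition rseq := nat -> R.

Definition in_l1 (x : rseq) : Prop := ex_series (fun n => Rabs (x n)).
Definition l1norm (x : rseq) : R := Series (fun n => Rabs (x n)).
Definition in_linf (f : rseq) : Prop := exists M, forall n, Rabs (f n) <= M.
Definition in_c0 (f : rseq) : Prop := is_lim_seq f 0.

Definition pairing (x f : rseq) : R := Series (fun n => x n * f n).

(** z is an element of ell_1'' = (ell_infinity)': a linear functional on
    ell_infinity, bounded with respect to the sup norm. *)
Definition bidual (z : rseq -> R) : Prop :=
  (forall f g, in_linf f -> in_linf g -> z (fun n => f n + g n) = z f + z g) /\
  (forall (t : R) f, in_linf f -> z (fun n => t * f n) = t * z f) /\
  (exists C, forall f M, in_linf f -> (forall n, Rabs (f n) <= M) ->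
                          Rabs (z f) <= C * M).

Definition c0_perp (z : rseq -> R) : Prop :=
  bidual z /\ forall f, in_c0 f -> z f = 0.

Definition directed {I : Type} (le : I -> I -> Prop) : Prop :=
  (forall i, le i i) /\
  (forall i j k, le i j -> le j k -> le i k) /\
  inhabited I /\
  (forall i j, exists k, le i k /\ le j k).

Definition net_lim {I : Type} (le : I -> I -> Prop) (v : I -> R) (L : R) : Prop :=
  forall eps, 0 < eps -> exists i0, forall i, le i0 i -> Rabs (v i - L) < eps.

Definition weakstar_net {I : Type} (le : I -> I -> Prop) (x : I -> rseq)
    (z : rseq -> R) : Prop :=
  (forall i, in_l1 (x i)) /\
  forall f, in_linf f -> net_lim le (fun i => pairing (x i) f) (z f).

Definition trilinear_l1 (A : rseq -> rseq -> rseq -> R) : Prop :=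
  (forall x x' y u, in_l1 x -> in_l1 x' -> in_l1 y -> in_l1 u ->
     A (fun n => x n + x' n) y u = A x y u + A x' y u) /\
  (forall t x y u, in_l1 x -> in_l1 y -> in_l1 u ->
     A (fun n => t * x n) y u = t * A x y u) /\
  (forall x y y' u, in_l1 x -> in_l1 y -> in_l1 y' -> in_l1 u ->
     A x (fun n => y n + y' n) u = A x y u + A x y' u) /\
  (forall t x y u, in_l1 x -> in_l1 y -> in_l1 u ->
     A x (fun n => t * y n) u = t * A x y u) /\
  (forall x y u u', in_l1 x -> in_l1 y -> in_l1 u -> in_l1 u' ->
     A x y (fun n => u n + u' n) = A x y u + A x y u') /\
  (forall t x y u, in_l1 x -> in_l1 y -> in_l1 u ->
     A x y (fun n => t * u n) = t * A x y u).

Definition continuous_trilinear_l1 (A : rseq -> rseq -> rseq -> R) : Prop :=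
  trilinear_l1 A /\
  exists C, forall x y u, in_l1 x -> in_l1 y -> in_l1 u ->
    Rabs (A x y u) <= C * l1norm x * l1norm y * l1norm u.

Definition symmetric_l1 (A : rseq -> rseq -> rseq -> R) : Prop :=
  forall x y u, in_l1 x -> in_l1 y -> in_l1 u ->
    A x y u = A y x u /\ A x y u = A x u y /\ A x y u = A u y x.

(** Ã(z1,z2,z3) = v, where Ã is the Aron–Berner extension: for all nets
    x -> z1, y -> z2, u -> z3 weak-star, the iterated limit
    lim_i lim_j lim_k A(x_i, y_j, u_k) (innermost = last variable) exists
    and equals v. *)
Definition aron_berner_eq (A : rseq -> rseq -> rseq -> R)
    (z1 z2 z3 : rseq -> R) (v : R) : Prop :=
  forall (I J K : Type) (leI : I -> I -> Prop) (leJ : J -> J -> Prop)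
         (leK : K -> K -> Prop) (x : I -> rseq) (y : J -> rseq) (u : K -> rseq),
    directed leI -> directed leJ -> directed leK ->
    weakstar_net leI x z1 -> weakstar_net leJ y z2 -> weakstar_net leK u z3 ->
    exists (L : I -> J -> R) (M : I -> R),
      (forall i j, net_lim leK (fun k => A (x i) (y j) (u k)) (L i j)) /\
      (forall i, net_lim leJ (L i) (M i)) /\
      net_lim leI M v.

From Stdlib Require Import Reals Lra FunctionalExtensionality.
From Coquelicot Require Import Coquelicot.
Open Scope R_scope.

(* A is the symmetrisation of  sum_{i<j<k} a_i b_j c_k x_i y_j u_k,  and psum_ab x y k is the
   partial sum  sum_{i<j<k} a_i b_j (x_i y_j + y_i x_j)  of the bilinear form
   beta(x,y) = sum_{i<j} a_i b_j (x_i y_j + y_i x_j).  Summing by parts, u |-> A(x,y,u) is the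
   pairing of u with a bounded sequence equal to beta(x,y) c modulo c_0: only the terms in which
   u carries the largest index survive, the others having coefficients that are tails of
   convergent series.  A functional in c_0^perp therefore sees only z3(c) beta(x,y).  Likewise
   y |-> beta(x,y) is the pairing of y with <x,a> b modulo c_0, and the outer limit in x
   produces z1(a). *)

Fixpoint psum (f : rseq) (k : nat) : R :=
  match k with O => 0 | S k => psum f k + f k end.

Lemma psum_sum_n f N : psum f (S N) = sum_n f N.
Proof.
  induction N as [|N IH].
  - rewrite sum_O; simpl; ring.
  - rewrite sum_Sn, <- IH; reflexivity.
Qed.

Lemma psum_ext f g N : (forall n, f n = g n) -> psum f N = psum g N.
Proof. intros H; induction N; simpl; [ring | rewrite IHN, H; ring]. Qed.

Lemma psum_plus f g N : psum (fun n => f n + g n) N = psum f N + psum g N.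
Proof. induction N; simpl; [ring | rewrite IHN; ring]. Qed.

Lemma psum_scal t f N : psum (fun n => t * f n) N = t * psum f N.
Proof. induction N; simpl; [ring | rewrite IHN; ring]. Qed.

Lemma psum_le f g N : (forall n, f n <= g n) -> psum f N <= psum g N.
Proof. intros H; induction N; simpl; [lra | specialize (H N); lra]. Qed.

Lemma Rabs_psum_le f N : Rabs (psum f N) <= psum (fun n => Rabs (f n)) N.
Proof.
  induction N; simpl.
  - rewrite Rabs_R0; lra.
  - eapply Rle_trans; [apply Rabs_triang | lra].
Qed.

Lemma psum_lim f : ex_series f -> is_lim_seq (psum f) (Series f).
Proof.
  intros H. apply is_lim_seq_incr_1, is_lim_seq_ext with (sum_n f).
  - intros; now rewrite psum_sum_n.
  - exact (Series_correct f H).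
Qed.

Lemma psum_is_series f (l : R) : is_lim_seq (psum f) l -> is_series f l.
Proof.
  intros H. apply is_lim_seq_incr_1 in H.
  exact (is_lim_seq_ext _ (sum_n f) _ (psum_sum_n f) H).
Qed.

Lemma psum_le_Series f N : (forall n, 0 <= f n) -> ex_series f -> psum f N <= Series f.
Proof.
  intros Hf Hs.
  assert (Hmono : forall m, psum f N <= psum f (m + N)).
  { induction m; simpl; [lra | specialize (Hf (m + N)%nat); lra]. }
  pose proof (proj1 (is_lim_seq_incr_n _ N _) (psum_lim f Hs)) as Hlim.
  exact (is_lim_seq_le _ _ _ _ Hmono (is_lim_seq_const _) Hlim).
Qed.

Lemma Rabs_mult_le x y M N : Rabs x <= M -> Rabs y <= N -> Rabs (x * y) <= M * N.
Proof. intros. rewrite Rabs_mult. apply Rmult_le_compat; auto using Rabs_pos. Qed.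

Lemma is_lim_seq_linf f (l : R) : is_lim_seq f l -> in_linf f.
Proof.
  intros H. destruct (filterlim_bounded f (ex_intro _ l H)) as [M HM].
  exists M; exact HM.
Qed.

Lemma c0_linf f : in_c0 f -> in_linf f.
Proof. apply is_lim_seq_linf. Qed.

Lemma c0_ext f g : (forall n, f n = g n) -> in_c0 f -> in_c0 g.
Proof. apply is_lim_seq_ext. Qed.

Lemma c0_sub_lim f (l : R) : is_lim_seq f l -> in_c0 (fun n => f n - l).
Proof.
  intros H. unfold in_c0. replace 0 with (l - l) by ring.
  exact (is_lim_seq_minus' _ _ _ _ H (is_lim_seq_const l)).
Qed.

Lemma c0_plus f g : in_c0 f -> in_c0 g -> in_c0 (fun n => f n + g n).
Proof.
  unfold in_c0; intros Hf Hg. replace 0 with (0 + 0) by ring.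
  exact (is_lim_seq_plus' _ _ _ _ Hf Hg).
Qed.

Lemma c0_mul f g : in_linf f -> in_c0 g -> in_c0 (fun n => f n * g n).
Proof.
  intros [M Hf] Hg. apply is_lim_seq_abs_0 in Hg. apply is_lim_seq_abs_0.
  apply is_lim_seq_le_le with (fun _ => 0) (fun n => M * Rabs (g n)).
  - intros n. rewrite Rabs_mult. split.
    + apply Rmult_le_pos; apply Rabs_pos.
    + apply Rmult_le_compat_r; [apply Rabs_pos | apply Hf].
  - apply is_lim_seq_const.
  - replace (Finite 0) with (Finite (M * 0)) by (f_equal; ring).
    exact (is_lim_seq_mult' _ _ _ _ (is_lim_seq_const M) Hg).
Qed.

Lemma linf_nonneg_bound f : in_linf f -> exists M, 0 <= M /\ forall n, Rabs (f n) <= M.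
Proof.
  intros [M H]. exists M. split; [exact (Rle_trans _ _ _ (Rabs_pos _) (H O)) | exact H].
Qed.

Lemma linf_mul f g : in_linf f -> in_linf g -> in_linf (fun n => f n * g n).
Proof. intros [M Hf] [K Hg]. exists (M * K). intros n. now apply Rabs_mult_le. Qed.

Lemma linf_scal t f : in_linf f -> in_linf (fun n => t * f n).
Proof. apply linf_mul. exists (Rabs t). intros; lra. Qed.

Lemma linf_plus f g : in_linf f -> in_linf g -> in_linf (fun n => f n + g n).
Proof.
  intros [M Hf] [K Hg]. exists (M + K). intros n.
  eapply Rle_trans; [apply Rabs_triang | specialize (Hf n); specialize (Hg n); lra].
Qed.

Lemma l1_ex x : in_l1 x -> ex_series x.
Proof. apply ex_series_Rabs. Qed.

Lemma l1_plus x y : in_l1 x -> in_l1 y -> in_l1 (fun n => x n + y n).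
Proof.
  intros Hx Hy.
  apply (@ex_series_le R_AbsRing R_CompleteNormedModule _ (fun n => Rabs (x n) + Rabs (y n))).
  - intros n. change (Rabs (Rabs (x n + y n)) <= Rabs (x n) + Rabs (y n)).
    rewrite Rabs_Rabsolu. apply Rabs_triang.
  - exact (@ex_series_plus R_AbsRing R_NormedModule _ _ Hx Hy).
Qed.

Lemma l1_mul_linf x f : in_l1 x -> in_linf f -> in_l1 (fun n => x n * f n).
Proof.
  intros Hx Hf. destruct (linf_nonneg_bound f Hf) as [M [HM Hf']].
  apply (@ex_series_le R_AbsRing R_CompleteNormedModule _ (fun n => M * Rabs (x n))).
  - intros n. change (Rabs (Rabs (x n * f n)) <= M * Rabs (x n)).
    rewrite Rabs_Rabsolu, Rabs_mult, Rmult_comm.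
    apply Rmult_le_compat_r; [apply Rabs_pos | apply Hf'].
  - exact (@ex_series_scal_l R_AbsRing R_NormedModule M _ Hx).
Qed.

Lemma psum_mul_bound x g M k : in_l1 x -> (forall n, Rabs (g n) <= M) ->
  Rabs (psum (fun n => x n * g n) k) <= M * l1norm x.
Proof.
  intros Hx Hg. assert (HM : 0 <= M) by exact (Rle_trans _ _ _ (Rabs_pos _) (Hg O)).
  eapply Rle_trans; [apply Rabs_psum_le |].
  eapply Rle_trans; [apply (psum_le _ (fun n => M * Rabs (x n))) |].
  - intros n. rewrite Rabs_mult, Rmult_comm.
    apply Rmult_le_compat_r; [apply Rabs_pos | apply Hg].
  - rewrite psum_scal. apply Rmult_le_compat_l; [exact HM |].
    exact (psum_le_Series _ k (fun n => Rabs_pos (x n)) Hx).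
Qed.

Lemma pairing_ex x f : in_l1 x -> in_linf f -> ex_series (fun n => x n * f n).
Proof. intros; now apply l1_ex, l1_mul_linf. Qed.

Lemma pairing_plus_r x f g : in_l1 x -> in_linf f -> in_linf g ->
  pairing x (fun n => f n + g n) = pairing x f + pairing x g.
Proof.
  intros Hx Hf Hg. unfold pairing. rewrite <- Series_plus by now apply pairing_ex.
  apply Series_ext; intros; ring.
Qed.

Lemma pairing_bound x f M : in_l1 x -> (forall n, Rabs (f n) <= M) ->
  Rabs (pairing x f) <= M * l1norm x.
Proof.
  intros Hx Hf.
  assert (Hlim : is_lim_seq (fun N => Rabs (psum (fun n => x n * f n) N)) (Rabs (pairing x f))).
  { apply (is_lim_seq_abs _ (Finite (pairing x f))).
    apply psum_lim, pairing_ex; [exact Hx | now exists M]. }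
  exact (is_lim_seq_le _ _ _ _ (fun N => psum_mul_bound x f M N Hx Hf) Hlim
           (is_lim_seq_const _)).
Qed.

Lemma Series_sub_psum_c0 p : ex_series p -> in_c0 (fun N => Series p - psum p N).
Proof.
  intros H. unfold in_c0. replace 0 with (Series p - Series p) by ring.
  exact (is_lim_seq_minus' _ _ _ _ (is_lim_seq_const _) (psum_lim p H)).
Qed.

Definition tail (p : rseq) (j : nat) : R := Series p - psum p (S j).

Lemma tail_c0 p : ex_series p -> in_c0 (tail p).
Proof. intros H. exact (proj1 (is_lim_seq_incr_1 _ _) (Series_sub_psum_c0 p H)). Qed.

Lemma tail_linf p : in_l1 p -> in_linf (tail p).
Proof. intros; now apply c0_linf, tail_c0, l1_ex. Qed.

Lemma psum_linf x : in_l1 x -> in_linf (psum x).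
Proof. intros Hx. exact (is_lim_seq_linf _ _ (psum_lim x (l1_ex x Hx))). Qed.

Lemma pairing_psum_tail p q : in_l1 p -> in_l1 q ->
  pairing p (psum q) = pairing q (tail p).
Proof.
  intros Hp Hq. unfold pairing.
  assert (Habel : forall N, psum (fun k => p k * psum q k) N =
            psum (fun j => q j * tail p j) N - (Series p - psum p N) * psum q N).
  { induction N as [|N IH]; simpl; [ring |]. rewrite IH. unfold tail; simpl; ring. }
  apply is_series_unique, psum_is_series.
  apply is_lim_seq_ext with
    (fun N => psum (fun j => q j * tail p j) N - (Series p - psum p N) * psum q N).
  { intros N; now rewrite Habel. }
  replace (Series (fun j => q j * tail p j))
    with (Series (fun j => q j * tail p j) - 0 * Series q) by ring.
  apply is_lim_seq_minus', is_lim_seq_mult'.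
  - exact (psum_lim _ (pairing_ex q _ Hq (tail_linf p Hp))).
  - exact (Series_sub_psum_c0 p (l1_ex p Hp)).
  - exact (psum_lim q (l1_ex q Hq)).
Qed.

Lemma c0_perp_eq_mod_c0 z f g t : c0_perp z -> in_linf f -> in_linf g ->
  in_c0 (fun n => g n - t * f n) -> z g = t * z f.
Proof.
  intros [[Hadd [Hscal _]] Hc0] Hf Hg Hr.
  replace g with (fun n => t * f n + (g n - t * f n))
    by (apply functional_extensionality; intros; ring).
  rewrite Hadd, Hscal, (Hc0 _ Hr) by auto using linf_scal, c0_linf.
  ring.
Qed.

Lemma net_lim_ext {I : Type} (le : I -> I -> Prop) v w L L' :
  (forall i, v i = w i) -> L = L' -> net_lim le v L -> net_lim le w L'.
Proof.
  intros Hvw <- Hv eps Heps. destruct (Hv eps Heps) as [i0 Hi0].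
  exists i0. intros i Hi. rewrite <- Hvw. auto.
Qed.

Lemma net_lim_scal {I : Type} (le : I -> I -> Prop) v L t :
  net_lim le v L -> net_lim le (fun i => t * v i) (t * L).
Proof.
  intros Hv eps Heps.
  pose proof (Rabs_pos t) as Ht.
  assert (Hd : 0 < eps / (Rabs t + 1)) by (apply Rdiv_lt_0_compat; lra).
  destruct (Hv _ Hd) as [i0 Hi0]. exists i0. intros i Hi. specialize (Hi0 i Hi).
  replace (t * v i - t * L) with (t * (v i - L)) by ring. rewrite Rabs_mult.
  apply Rle_lt_trans with (Rabs t * (eps / (Rabs t + 1))).
  - apply Rmult_le_compat_l; lra.
  - replace eps with ((Rabs t + 1) * (eps / (Rabs t + 1))) at 2 by (field; lra).
    apply Rmult_lt_compat_r; lra.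
Qed.

Lemma aron_berner_eq_of_representations (A : rseq -> rseq -> rseq -> R)
    (z1 z2 z3 : rseq -> R) (G : rseq -> rseq -> rseq) (H : rseq -> rseq) (h : rseq)
    (s2 s3 : R) :
  (forall x y u, in_l1 x -> in_l1 y -> in_l1 u -> A x y u = pairing u (G x y)) ->
  (forall x y, in_l1 x -> in_l1 y -> in_linf (G x y)) ->
  (forall x y, in_l1 x -> in_l1 y -> z3 (G x y) = s3 * pairing y (H x)) ->
  (forall x, in_l1 x -> in_linf (H x)) ->
  (forall x, in_l1 x -> z2 (H x) = s2 * pairing x h) ->
  in_linf h ->
  aron_berner_eq A z1 z2 z3 (s3 * s2 * z1 h).
Proof.
  intros HA HG Hz3 HH Hz2 Hh I J K leI leJ leK x y u _ _ _ [Hx Wx] [Hy Wy] [Hu Wu].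
  exists (fun i j => z3 (G (x i) (y j))), (fun i => s3 * (s2 * pairing (x i) h)).
  split; [| split].
  - intros i j.
    apply net_lim_ext with (fun k => pairing (u k) (G (x i) (y j))) (z3 (G (x i) (y j))).
    + intros k. now rewrite HA.
    + reflexivity.
    + exact (Wu _ (HG _ _ (Hx i) (Hy j))).
  - intros i.
    apply net_lim_ext with (fun j => s3 * pairing (y j) (H (x i))) (s3 * z2 (H (x i))).
    + intros j. now rewrite Hz3.
    + now rewrite Hz2.
    + exact (net_lim_scal _ _ _ _ (Wy _ (HH _ (Hx i)))).
  - apply net_lim_ext with (fun i => (s3 * s2) * pairing (x i) h) ((s3 * s2) * z1 h).
    + intros; ring.
    + reflexivity.
    + exact (net_lim_scal _ _ _ _ (Wx _ Hh)).
Qed.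

Section SymmetricForms.

Variable A : rseq -> rseq -> rseq -> R.
Hypothesis A_swap12 : forall x y u, A x y u = A y x u.
Hypothesis A_swap23 : forall x y u, A x y u = A x u y.

Lemma symmetric_l1_of_swaps : symmetric_l1 A.
Proof.
  intros x y u _ _ _. split; [| split]; auto.
  now rewrite A_swap12, A_swap23, A_swap12.
Qed.

Lemma trilinear_l1_of_swaps :
  (forall x x' y u, in_l1 x -> in_l1 x' -> in_l1 y -> in_l1 u ->
     A (fun n => x n + x' n) y u = A x y u + A x' y u) ->
  (forall t x y u, in_l1 x -> in_l1 y -> in_l1 u ->
     A (fun n => t * x n) y u = t * A x y u) ->
  trilinear_l1 A.
Proof.
  intros Hadd Hscal.
  assert (Hadd2 : forall x y y' u, in_l1 x -> in_l1 y -> in_l1 y' -> in_l1 u ->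
            A x (fun n => y n + y' n) u = A x y u + A x y' u).
  { intros. rewrite !(A_swap12 x). auto. }
  assert (Hscal2 : forall t x y u, in_l1 x -> in_l1 y -> in_l1 u ->
            A x (fun n => t * y n) u = t * A x y u).
  { intros. rewrite !(A_swap12 x). auto. }
  repeat split; auto; intros; rewrite !(A_swap23 x y); auto.
Qed.

End SymmetricForms.

Section Form.

Variables a b c : rseq.
Hypotheses (Ha : in_linf a) (Hb : in_linf b) (Hc : in_linf c).

Definition psum_a (x : rseq) : rseq := psum (fun i => x i * a i).

Definition psum_ab (x y : rseq) : rseq :=
  psum (fun j => b j * (y j * psum_a x j + x j * psum_a y j)).

Definition Aterm (x y u : rseq) (k : nat) : R :=
  u k * (c k * psum_ab x y k) + y k * (c k * psum_ab x u k) + x k * (c k * psum_ab y u k).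

Definition Aform (x y u : rseq) : R := Series (Aterm x y u).

Lemma psum_ab_comm x y : psum_ab x y = psum_ab y x.
Proof. apply functional_extensionality; intros k. apply psum_ext; intros; ring. Qed.

Lemma Aterm_swap12 x y u : Aterm x y u = Aterm y x u.
Proof.
  apply functional_extensionality; intros k. unfold Aterm.
  rewrite (psum_ab_comm x y), (psum_ab_comm x u), (psum_ab_comm y u). ring.
Qed.

Lemma Aterm_swap23 x y u : Aterm x y u = Aterm x u y.
Proof.
  apply functional_extensionality; intros k. unfold Aterm.
  rewrite (psum_ab_comm y u). ring.
Qed.

Lemma psum_a_plus x x' j : psum_a (fun n => x n + x' n) j = psum_a x j + psum_a x' j.
Proof. unfold psum_a. rewrite <- psum_plus. apply psum_ext; intros; ring. Qed.

Lemma psum_a_scal t x j : psum_a (fun n => t * x n) j = t * psum_a x j.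
Proof. unfold psum_a. rewrite <- psum_scal. apply psum_ext; intros; ring. Qed.

Lemma psum_ab_plus x x' y k :
  psum_ab (fun n => x n + x' n) y k = psum_ab x y k + psum_ab x' y k.
Proof.
  unfold psum_ab. rewrite <- psum_plus. apply psum_ext; intros. rewrite psum_a_plus. ring.
Qed.

Lemma psum_ab_scal t x y k : psum_ab (fun n => t * x n) y k = t * psum_ab x y k.
Proof.
  unfold psum_ab. rewrite <- psum_scal. apply psum_ext; intros. rewrite psum_a_scal. ring.
Qed.

Lemma Aterm_plus x x' y u k :
  Aterm (fun n => x n + x' n) y u k = Aterm x y u k + Aterm x' y u k.
Proof. unfold Aterm. rewrite !psum_ab_plus. ring. Qed.

Lemma Aterm_scal t x y u k : Aterm (fun n => t * x n) y u k = t * Aterm x y u k.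
Proof. unfold Aterm. rewrite !psum_ab_scal. ring. Qed.

Lemma psum_a_lim x : in_l1 x -> is_lim_seq (psum_a x) (pairing x a).
Proof. intros Hx. exact (psum_lim _ (pairing_ex x a Hx Ha)). Qed.

Lemma psum_a_linf x : in_l1 x -> in_linf (psum_a x).
Proof. intros Hx. exact (is_lim_seq_linf _ _ (psum_a_lim x Hx)). Qed.

Lemma psum_ab_split x y k :
  psum_ab x y k =
  psum (fun j => y j * (b j * psum_a x j)) k + psum (fun j => x j * (b j * psum_a y j)) k.
Proof. unfold psum_ab. rewrite <- psum_plus. apply psum_ext; intros; ring. Qed.

Lemma psum_ab_linf x y : in_l1 x -> in_l1 y -> in_linf (psum_ab x y).
Proof.
  intros Hx Hy.
  replace (psum_ab x y) with (fun k => psum (fun j => y j * (b j * psum_a x j)) k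
                                       + psum (fun j => x j * (b j * psum_a y j)) k)
    by (apply functional_extensionality; intros; symmetry; apply psum_ab_split).
  apply linf_plus; apply psum_linf, l1_mul_linf; auto using linf_mul, psum_a_linf.
Qed.

Lemma Aterm_ex x y u : in_l1 x -> in_l1 y -> in_l1 u -> ex_series (Aterm x y u).
Proof.
  intros Hx Hy Hu. apply l1_ex. unfold Aterm.
  repeat apply l1_plus; apply l1_mul_linf; auto using linf_mul, psum_ab_linf.
Qed.

Lemma Aform_plus x x' y u : in_l1 x -> in_l1 x' -> in_l1 y -> in_l1 u ->
  Aform (fun n => x n + x' n) y u = Aform x y u + Aform x' y u.
Proof.
  intros. unfold Aform. rewrite <- Series_plus by now apply Aterm_ex.
  apply Series_ext, Aterm_plus.
Qed.

Lemma Aform_scal t x y u : Aform (fun n => t * x n) y u = t * Aform x y u.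
Proof. unfold Aform. rewrite <- Series_scal_l. apply Series_ext, Aterm_scal. Qed.

Lemma psum_a_bounded : exists C, forall x j, in_l1 x -> Rabs (psum_a x j) <= C * l1norm x.
Proof. destruct Ha as [Ma HMa]. exists Ma. intros x j Hx. now apply psum_mul_bound. Qed.

Lemma psum_ab_bounded : exists C, forall x y k, in_l1 x -> in_l1 y ->
  Rabs (psum_ab x y k) <= C * l1norm x * l1norm y.
Proof.
  destruct psum_a_bounded as [C HC], Hb as [Mb HMb].
  exists (2 * (Mb * C)). intros x y k Hx Hy. rewrite psum_ab_split.
  eapply Rle_trans; [apply Rabs_triang |].
  pose proof (psum_mul_bound y _ (Mb * (C * l1norm x)) k Hy
                (fun j => Rabs_mult_le _ _ _ _ (HMb j) (HC x j Hx))).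
  pose proof (psum_mul_bound x _ (Mb * (C * l1norm y)) k Hx
                (fun j => Rabs_mult_le _ _ _ _ (HMb j) (HC y j Hy))).
  lra.
Qed.

Lemma Aform_swap12 x y u : Aform x y u = Aform y x u.
Proof. unfold Aform. now rewrite Aterm_swap12. Qed.

Lemma Aform_swap23 x y u : Aform x y u = Aform x u y.
Proof. unfold Aform. now rewrite Aterm_swap23. Qed.

Lemma Aform_pairings x y u : in_l1 x -> in_l1 y -> in_l1 u ->
  Aform x y u = pairing u (fun k => c k * psum_ab x y k)
                + pairing y (fun k => c k * psum_ab x u k)
                + pairing x (fun k => c k * psum_ab y u k).
Proof.
  intros Hx Hy Hu. unfold Aform, pairing.
  assert (Hex : forall v w p, in_l1 v -> in_l1 w -> in_l1 p ->
            ex_series (fun k => p k * (c k * psum_ab v w k))).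
  { intros; apply pairing_ex; auto using linf_mul, psum_ab_linf. }
  rewrite <- !Series_plus by auto using ex_series_plus.
  apply Series_ext; intros k. unfold Aterm; ring.
Qed.

Lemma Aform_bounded : exists C, forall x y u, in_l1 x -> in_l1 y -> in_l1 u ->
  Rabs (Aform x y u) <= C * l1norm x * l1norm y * l1norm u.
Proof.
  destruct psum_ab_bounded as [C HC], Hc as [Mc HMc].
  exists (3 * (Mc * C)). intros x y u Hx Hy Hu. rewrite Aform_pairings by auto.
  assert (Hcb : forall v w, in_l1 v -> in_l1 w -> forall k,
            Rabs (c k * psum_ab v w k) <= Mc * (C * l1norm v * l1norm w)).
  { intros v w Hv Hw k. exact (Rabs_mult_le _ _ _ _ (HMc k) (HC v w k Hv Hw)). }
  pose proof (pairing_bound u _ _ Hu (Hcb x y Hx Hy)).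
  pose proof (pairing_bound y _ _ Hy (Hcb x u Hx Hu)).
  pose proof (pairing_bound x _ _ Hx (Hcb y u Hy Hu)).
  eapply Rle_trans; [apply Rabs_triang |].
  eapply Rle_trans; [apply Rplus_le_compat_r, Rabs_triang |].
  lra.
Qed.

Definition rep_ab (x : rseq) (k : nat) : R :=
  b k * psum_a x k + a k * tail (fun j => x j * b j) k.

Definition transpose_ab (p x : rseq) (k : nat) : R :=
  b k * psum_a x k * tail p k + a k * tail (fun j => x j * b j * tail p j) k.

Definition rep_abc (x y : rseq) (k : nat) : R :=
  c k * psum_ab x y k + transpose_ab (fun j => y j * c j) x k
  + transpose_ab (fun j => x j * c j) y k.

Lemma pairing_psum_a p u : in_l1 p -> in_l1 u ->
  pairing p (psum_a u) = pairing u (fun i => a i * tail p i).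
Proof.
  intros Hp Hu. unfold psum_a. rewrite pairing_psum_tail by auto using l1_mul_linf.
  unfold pairing. apply Series_ext; intros; ring.
Qed.

Lemma psum_ab_lim x y : in_l1 x -> in_l1 y -> is_lim_seq (psum_ab x y) (pairing y (rep_ab x)).
Proof.
  intros Hx Hy.
  assert (Hxb : in_l1 (fun j => x j * b j)) by now apply l1_mul_linf.
  assert (Hlim2 : is_lim_seq (psum (fun j => x j * (b j * psum_a y j)))
                    (pairing y (fun k => a k * tail (fun j => x j * b j) k))).
  { rewrite <- pairing_psum_a by auto. unfold pairing.
    rewrite (Series_ext _ (fun j => x j * (b j * psum_a y j))) by (intros; ring).
    apply psum_lim, pairing_ex; auto using linf_mul, psum_a_linf. }
  unfold rep_ab. rewrite pairing_plus_r by auto using linf_mul, psum_a_linf, tail_linf.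
  apply is_lim_seq_ext with (fun k => psum (fun j => y j * (b j * psum_a x j)) k
                                      + psum (fun j => x j * (b j * psum_a y j)) k).
  { intros; symmetry; apply psum_ab_split. }
  apply is_lim_seq_plus'; [| exact Hlim2].
  apply psum_lim, pairing_ex; auto using linf_mul, psum_a_linf.
Qed.

Lemma psum_ab_transpose p x u : in_l1 p -> in_l1 x -> in_l1 u ->
  pairing p (psum_ab x u) = pairing u (transpose_ab p x).
Proof.
  intros Hp Hx Hu.
  assert (Hq1 : in_l1 (fun j => u j * (b j * psum_a x j)))
    by auto using l1_mul_linf, linf_mul, psum_a_linf.
  assert (Hq2 : in_l1 (fun j => x j * (b j * psum_a u j)))
    by auto using l1_mul_linf, linf_mul, psum_a_linf.
  assert (Hxbp : in_l1 (fun j => x j * b j * tail p j)) by auto using l1_mul_linf, tail_linf.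
  replace (psum_ab x u) with (fun k => psum (fun j => u j * (b j * psum_a x j)) k
                                 + psum (fun j => x j * (b j * psum_a u j)) k)
    by (apply functional_extensionality; intros; symmetry; apply psum_ab_split).
  rewrite pairing_plus_r, !pairing_psum_tail by auto using psum_linf.
  replace (pairing (fun j => x j * (b j * psum_a u j)) (tail p))
    with (pairing (fun j => x j * b j * tail p j) (psum_a u))
    by (unfold pairing; apply Series_ext; intros; ring).
  rewrite pairing_psum_a by auto.
  unfold transpose_ab. rewrite pairing_plus_r by auto using linf_mul, psum_a_linf, tail_linf.
  f_equal. unfold pairing. apply Series_ext; intros; ring.
Qed.

Lemma rep_ab_linf x : in_l1 x -> in_linf (rep_ab x).
Proof.
  intros Hx. apply linf_plus; apply linf_mul; auto using psum_a_linf, tail_linf, l1_mul_linf.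
Qed.

Lemma rep_ab_mod_c0 x : in_l1 x -> in_c0 (fun k => rep_ab x k - pairing x a * b k).
Proof.
  intros Hx. apply c0_ext with (fun k => b k * (psum_a x k - pairing x a)
                                        + a k * tail (fun j => x j * b j) k).
  { intros; unfold rep_ab; ring. }
  apply c0_plus; apply c0_mul; auto using c0_sub_lim, psum_a_lim, tail_c0, l1_ex, l1_mul_linf.
Qed.

Lemma transpose_ab_c0 p x : in_l1 p -> in_l1 x -> in_c0 (transpose_ab p x).
Proof.
  intros Hp Hx. apply c0_plus; apply c0_mul;
    auto using linf_mul, psum_a_linf, tail_c0, tail_linf, l1_ex, l1_mul_linf.
Qed.

Lemma rep_abc_linf x y : in_l1 x -> in_l1 y -> in_linf (rep_abc x y).
Proof.
  intros Hx Hy.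
  apply linf_plus; [apply linf_plus; [apply linf_mul |] |];
    auto using psum_ab_linf, c0_linf, transpose_ab_c0, l1_mul_linf.
Qed.

Lemma rep_abc_mod_c0 x y : in_l1 x -> in_l1 y ->
  in_c0 (fun k => rep_abc x y k - pairing y (rep_ab x) * c k).
Proof.
  intros Hx Hy.
  apply c0_ext with (fun k => c k * (psum_ab x y k - pairing y (rep_ab x))
                              + (transpose_ab (fun j => y j * c j) x k
                                 + transpose_ab (fun j => x j * c j) y k)).
  { intros; unfold rep_abc; ring. }
  apply c0_plus; [apply c0_mul | apply c0_plus];
    auto using c0_sub_lim, psum_ab_lim, transpose_ab_c0, l1_mul_linf.
Qed.

Lemma Aform_rep x y u : in_l1 x -> in_l1 y -> in_l1 u -> Aform x y u = pairing u (rep_abc x y).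
Proof.
  intros Hx Hy Hu.
  assert (Hswap : forall v w p, pairing v (fun k => c k * psum_ab w p k)
                                = pairing (fun k => v k * c k) (psum_ab w p)).
  { intros; unfold pairing; apply Series_ext; intros; ring. }
  rewrite Aform_pairings, (Hswap y), (Hswap x), !psum_ab_transpose by auto using l1_mul_linf.
  unfold rep_abc. rewrite !pairing_plus_r;
    auto using linf_plus, linf_mul, psum_ab_linf, c0_linf, transpose_ab_c0, l1_mul_linf.
Qed.

End Form.

Theorem lemma3p3 (a b c : rseq) :
  in_linf a -> in_linf b -> in_linf c ->
  exists A : rseq -> rseq -> rseq -> R,
    continuous_trilinear_l1 A /\ symmetric_l1 A /\
    forall z1 z2 z3 : rseq -> R,
      bidual z1 -> c0_perp z2 -> c0_perp z3 ->
      aron_berner_eq A z1 z2 z3 (z1 a * z2 b * z3 c).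
Proof.
  intros Ha Hb Hc. exists (Aform a b c). split; [split | split].
  - apply trilinear_l1_of_swaps; auto using Aform_swap12, Aform_swap23, Aform_plus, Aform_scal.
  - exact (Aform_bounded a b c Ha Hb Hc).
  - apply symmetric_l1_of_swaps; auto using Aform_swap12, Aform_swap23.
  - intros z1 z2 z3 _ Hz2 Hz3.
    replace (z1 a * z2 b * z3 c) with (z3 c * z2 b * z1 a) by ring.
    apply aron_berner_eq_of_representations with (rep_abc a b c) (rep_ab a b); intros;
      auto using Aform_rep, rep_abc_linf, rep_ab_linf.
    + rewrite Rmult_comm. apply c0_perp_eq_mod_c0; auto using rep_abc_linf, rep_abc_mod_c0.
    + rewrite Rmult_comm. apply c0_perp_eq_mod_c0; auto using rep_ab_linf, rep_ab_mod_c0.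
Qed.
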